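(* Let $g(t)$, $t\in[0,T)$, be the maximal Ricci flow solution on $S^1\times S^3$ of the form $g(t)=\phi^2dz^2+a^2\omega^1\otimes\omega^1+b^2\omega^2\otimes\omega^2+c^2\omega^3\otimes\omega^3$ starting from initial data with $0<a\le b\le c$, and let $\check a(t)=\min_{s}a(s,t)$. If there exists $T<\infty$ such that $\check a(T)=0$, then $\check a(t)^2\le 4(T-t)$.
   Context: $S^3=SU(2)$ carries a global left-invariant frame $E_1,E_2,E_3$ with $[E_i,E_j]=-2\epsilon_{ijk}E_k$ and dual coframe $\omega^i$; $z\in S^1=[0,2\pi)$, $\phi,a,b,c$ positive smooth $2\pi$-periodic functions of $z$ (and $t$); $s$ is the arclength coordinate $ds=\phi\,dz$. The Ricci flow $\partial_tg=-2\mathrm{Ric}(g)$ preserves this form. $\check a(T)$ denotes the limiting value of $\check a(t)$ as $t\to T$. *)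

(* The Ricci flow on S^1 x S^3 restricted to the ansatz
     g(t) = phi^2 dz^2 + a^2 w1^2 + b^2 w2^2 + c^2 w3^2
   ([E_i,E_j] = -2 eps_ijk E_k) is encoded as the equivalent PDE system for
   (phi,a,b,c) : R -> R -> R (arguments z then t), 2*PI-periodic in z.
   Ricci tensor of this metric (orthonormal frame e0 = d/ds, e_i = E_i/a_i):
     Ric(e0,e0) = -(a_ss/a + b_ss/b + c_ss/c)
     Ric(e1,e1) = -a_ss/a - (a_s/a)(b_s/b + c_s/c)
                  + 2 (a^4 - (b^2-c^2)^2)/(a^2 b^2 c^2)   (and cyclically)
     mixed components vanish.
   d/dt g = -2 Ric then gives the system below. *)
From Stdlib Require Import Reals.
From Coquelicot Require Import Coquelicot.
Open Scope R_scope.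

Definition dz (f : R -> R -> R) : R -> R -> R :=
  fun z t => Derive (fun z' => f z' t) z.
Definition dt (f : R -> R -> R) : R -> R -> R :=
  fun z t => Derive (fun t' => f z t') t.

(* arclength derivative d/ds = (1/phi) d/dz *)
Definition ds (phi f : R -> R -> R) : R -> R -> R :=
  fun z t => dz f z t / phi z t.

Fixpoint CkOn (n : nat) (U : R -> R -> Prop) (f : R -> R -> R) : Prop :=
  match n with
  | O => forall z t, U z t ->
           continuous (fun p : R * R => f (fst p) (snd p)) (z, t)
  | S m => (forall z t, U z t ->
              ex_derive (fun z' => f z' t) z /\ ex_derive (fun t' => f z t') t)
           /\ CkOn m U (dz f) /\ CkOn m U (dt f)
  end.

Definition SmoothOn (U : R -> R -> Prop) (f : R -> R -> R) : Prop :=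
  forall n, CkOn n U f.

(* 2*PI-periodic in z, i.e. a function on S^1 = R / 2 PI Z *)
Definition periodic_z (f : R -> R -> R) : Prop :=
  forall z t, f (z + 2 * PI) t = f z t.

Definition RF_solution (phi a b c : R -> R -> R) (T : R) : Prop :=
  0 < T /\
  (forall f, (f = phi \/ f = a \/ f = b \/ f = c) ->
     periodic_z f /\
     SmoothOn (fun _ t => 0 < t < T) f /\
     (forall z t, 0 <= t < T ->
        continuous (fun p : R * R => f (fst p) (snd p)) (z, t)) /\
     (forall z t, 0 <= t < T -> 0 < f z t)) /\
  (forall z t, 0 < t < T ->
     let a_s := ds phi a in let b_s := ds phi b in let c_s := ds phi c in
     let a_ss := ds phi a_s in let b_ss := ds phi b_s in
     let c_ss := ds phi c_s in
     let A := a z t in let B := b z t in let C := c z t in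
     dt phi z t = phi z t * (a_ss z t / A + b_ss z t / B + c_ss z t / C) /\
     dt a z t = a_ss z t + a_s z t * (b_s z t / B + c_s z t / C)
                - 2 * (A ^ 4 - (B ^ 2 - C ^ 2) ^ 2) / (A * B ^ 2 * C ^ 2) /\
     dt b z t = b_ss z t + b_s z t * (c_s z t / C + a_s z t / A)
                - 2 * (B ^ 4 - (C ^ 2 - A ^ 2) ^ 2) / (B * C ^ 2 * A ^ 2) /\
     dt c z t = c_ss z t + c_s z t * (a_s z t / A + b_s z t / B)
                - 2 * (C ^ 4 - (A ^ 2 - B ^ 2) ^ 2) / (C * A ^ 2 * B ^ 2)).

Definition RF_maximal (phi a b c : R -> R -> R) (T : R) : Prop :=
  RF_solution phi a b c T /\
  ~ (exists T' phi' a' b' c', T < T' /\ RF_solution phi' a' b' c' T' /\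
       forall z t, 0 <= t < T ->
         phi' z t = phi z t /\ a' z t = a z t /\ b' z t = b z t /\
         c' z t = c z t).

Definition amin (a : R -> R -> R) (t : R) : R :=
  real (Glb_Rbar (fun y => exists z, y = a z t)).

(* Both a <= b and a <= c persist along the flow, by the maximum principle applied to the
   spatial minimum of the weighted ratio (b/a - 1) exp (- K t).  At a spatial minimum of a
   we then have a_s = 0, a_ss >= 0, and the reaction term of the a-equation is at least
   -2/a, so (a^2)_t >= -4 there.  Hence min_z a^2 + 4 t is nondecreasing, and letting the
   later time tend to T, where min_z a -> 0, gives min_z a(t)^2 + 4 t <= 4 T. *)

From Stdlib Require Import Reals Lra Lia ZArith Classical ClassicalEpsilon.
From Coquelicot Require Import Coquelicot.
Open Scope R_scope.

Definition continuous_on_ab (F : R -> R) (p q : R) : Prop :=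
  forall t, p <= t <= q -> forall eps, 0 < eps -> exists d, 0 < d /\
    forall t', p <= t' <= q -> Rabs (t' - t) < d -> Rabs (F t' - F t) < eps.

Definition clamp (p q t : R) : R := Rmax p (Rmin q t).

Lemma clamp_id p q t : p <= t <= q -> clamp p q t = t.
Proof. intros. unfold clamp, Rmax, Rmin; repeat destruct Rle_dec; lra. Qed.

Lemma clamp_mem p q t : p <= q -> p <= clamp p q t <= q.
Proof. intros. unfold clamp, Rmax, Rmin; repeat destruct Rle_dec; lra. Qed.

Lemma clamp_lipschitz p q x y : p <= q ->
  Rabs (clamp p q x - clamp p q y) <= Rabs (x - y).
Proof.
  intros. unfold clamp, Rmax, Rmin; repeat destruct Rle_dec; unfold Rabs;
  repeat destruct Rcase_abs; lra.
Qed.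

Lemma continuity_pt_clamp F p q c : p <= c <= q -> continuous_on_ab F p q ->
  continuity_pt (fun t => F (clamp p q t)) c.
Proof.
  intros Hc HF eps Heps.
  destruct (HF c Hc eps Heps) as [d [Hd Hclose]].
  exists d; split; [lra|]. intros x [_ Hx]. simpl in *. unfold R_dist in *.
  rewrite (clamp_id p q c Hc). apply Hclose; [apply clamp_mem; lra|].
  rewrite <- (clamp_id p q c Hc) at 1.
  eapply Rle_lt_trans; [apply clamp_lipschitz; lra | exact Hx].
Qed.

Lemma continuous_on_ab_min F p q : p <= q -> continuous_on_ab F p q ->
  exists s, p <= s <= q /\ forall t, p <= t <= q -> F s <= F t.
Proof.
  intros Hpq HF.
  destruct (continuity_ab_min (fun t => F (clamp p q t)) p q Hpq
              (fun c Hc => continuity_pt_clamp F p q c Hc HF)) as [s [Hmin Hs]].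
  exists s. split; [exact Hs|]. intros t Ht.
  specialize (Hmin t Ht). rewrite !clamp_id in Hmin; auto.
Qed.

Lemma derivable_pt_lim_linear_bound g s d eps : derivable_pt_lim g s d -> 0 < eps ->
  exists delta, 0 < delta /\
    forall h, Rabs h < delta -> Rabs (g (s + h) - g s - d * h) <= eps * Rabs h.
Proof.
  intros Hg Heps. destruct (Hg eps Heps) as [[delta Hdelta] Hq].
  exists delta. split; [exact Hdelta|]. intros h Hh.
  destruct (Req_dec h 0) as [->|Hh0].
  { replace (g (s + 0) - g s - d * 0) with 0 by (rewrite Rplus_0_r; ring).
    rewrite Rabs_R0; lra. }
  specialize (Hq h Hh0 Hh).
  replace (g (s + h) - g s - d * h) with (((g (s + h) - g s) / h - d) * h) by (field; exact Hh0).
  rewrite Rabs_mult. apply Rmult_le_compat_r; [apply Rabs_pos | lra].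
Qed.

Lemma continuous_on_ab_add_linear F e p q : continuous_on_ab F p q ->
  continuous_on_ab (fun t => F t + e * t) p q.
Proof.
  intros HF t Ht eps Heps.
  destruct (HF t Ht (eps / 2)) as [d [Hd Hclose]]; [lra|].
  exists (Rmin d (eps / (2 * (Rabs e + 1)))).
  assert (He : 0 < Rabs e + 1) by (pose proof (Rabs_pos e); lra).
  split; [apply Rmin_pos; [lra | apply Rdiv_lt_0_compat; lra]|].
  intros t' Ht' Hd'.
  assert (H1 : Rabs (F t' - F t) < eps / 2)
    by (apply Hclose; [exact Ht' | eapply Rlt_le_trans; [exact Hd' | apply Rmin_l]]).
  assert (H2 : Rabs e * Rabs (t' - t) <= eps / 2).
  { assert (Hdt : Rabs (t' - t) <= eps / (2 * (Rabs e + 1)))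
      by (left; eapply Rlt_le_trans; [exact Hd' | apply Rmin_r]).
    apply Rle_trans with ((Rabs e + 1) * (eps / (2 * (Rabs e + 1)))).
    - apply Rmult_le_compat; try apply Rabs_pos; lra.
    - right. field. lra. }
  replace (F t' + e * t' - (F t + e * t)) with ((F t' - F t) + e * (t' - t)) by ring.
  eapply Rle_lt_trans; [apply Rabs_triang|]. rewrite Rabs_mult. lra.
Qed.

(* If [F] ever became negative, tilting it by a small positive slope [e] would produce
   a minimum at some [s > p] with [F s < 0]; just left of [s] the barrier, and hence
   [F + e t], would be strictly smaller. *)
Lemma nonneg_of_barriers (F : R -> R) (p q : R) :
  p <= q -> continuous_on_ab F p q -> 0 <= F p ->
  (forall s, p < s <= q -> F s < 0 -> exists g d,
     (forall u, p <= u <= s -> F u <= g u) /\ g s = F s /\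
     derivable_pt_lim g s d /\ 0 <= d) ->
  0 <= F q.
Proof.
  intros Hpq HF Hp Hbarrier.
  destruct (Rle_lt_dec 0 (F q)) as [|Hq]; [assumption|exfalso].
  assert (Hpq' : p < q) by (destruct (Req_dec p q); [subst; lra | lra]).
  set (e := - F q / (2 * (q - p))).
  assert (He : 0 < e) by (unfold e; apply Rdiv_lt_0_compat; lra).
  assert (Hslope : e * (q - p) = - F q / 2) by (unfold e; field; lra).
  assert (HG := continuous_on_ab_add_linear F e p q HF).
  destruct (continuous_on_ab_min _ p q Hpq HG) as [s [Hs Hmin]].
  assert (Hsq := Hmin q ltac:(lra)). assert (Hsp := Hmin p ltac:(lra)). simpl in Hsq, Hsp.
  assert (Hps : p < s) by (destruct (Req_dec s p) as [->|]; nra).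
  assert (HFs : F s < 0) by nra.
  destruct (Hbarrier s (conj Hps (proj2 Hs)) HFs) as [g [d [Hle [Hgs [Hg Hd]]]]].
  destruct (derivable_pt_lim_linear_bound g s d (e / 2) Hg ltac:(lra)) as [delta [Hdelta Hlin]].
  set (k := Rmin (delta / 2) (s - p)).
  assert (Hk : 0 < k) by (apply Rmin_pos; lra).
  assert (Hkp : k <= s - p) by apply Rmin_r.
  assert (Hkd : k < delta) by (eapply Rle_lt_trans; [apply Rmin_l | lra]).
  specialize (Hlin (- k) ltac:(rewrite Rabs_Ropp, Rabs_pos_eq; lra)).
  rewrite Rabs_Ropp, (Rabs_pos_eq k) in Hlin by lra.
  pose proof (Rle_abs (g (s + - k) - g s - d * - k)).
  assert (Hgk := Hle (s + - k) ltac:(lra)).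
  assert (Hmk := Hmin (s + - k) ltac:(lra)). simpl in Hmk.
  nra.
Qed.

Lemma global_min_derive (h : R -> R) z0 :
  (forall z, h z0 <= h z) -> (forall z, ex_derive h z) -> ex_derive (Derive h) z0 ->
  Derive h z0 = 0 /\ 0 <= Derive (Derive h) z0.
Proof.
  intros Hmin Hex Hex2.
  assert (H0 : Derive h z0 = 0).
  { rewrite <- (Derive_Reals h z0 (ex_derive_Reals_0 h z0 (Hex z0))).
    apply (deriv_minimum h (z0 - 1) (z0 + 1)); [lra | lra | intros; apply Hmin]. }
  split; [exact H0|].
  destruct (Rle_lt_dec 0 (Derive (Derive h) z0)) as [|HD]; [assumption|exfalso].
  set (D := Derive (Derive h) z0) in *.
  assert (HdD : derivable_pt_lim (Derive h) z0 D)
    by (apply is_derive_Reals, Derive_correct, Hex2).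
  destruct (derivable_pt_lim_linear_bound _ z0 D (- D / 2) HdD ltac:(lra))
    as [delta [Hdelta Hlin]].
  set (pr := fun x => ex_derive_Reals_0 h x (Hex x)).
  (* [h'] < 0 on [(z0, z0 + delta)], so [h] drops below [h z0] by the mean value theorem *)
  destruct (MVT_cor1 h z0 (z0 + delta / 2) pr) as [c [Hmvt Hc]]; [lra|].
  rewrite Derive_Reals in Hmvt.
  assert (Hneg : Derive h c < 0).
  { specialize (Hlin (c - z0) ltac:(rewrite Rabs_pos_eq; lra)).
    replace (z0 + (c - z0)) with c in Hlin by ring.
    rewrite H0, (Rabs_pos_eq (c - z0)) in Hlin by lra.
    pose proof (Rle_abs (Derive h c - 0 - D * (c - z0))).
    assert (D * (c - z0) < 0) by nra. lra. }
  specialize (Hmin (z0 + delta / 2)).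
  assert (Derive h c * (z0 + delta / 2 - z0) < 0) by nra. lra.
Qed.

Lemma touching_derivatives (f g : R -> R) r z0 :
  (forall z, r * f z <= g z) -> r * f z0 = g z0 ->
  (forall z, ex_derive f z) -> (forall z, ex_derive g z) ->
  ex_derive (Derive f) z0 -> ex_derive (Derive g) z0 ->
  Derive g z0 = r * Derive f z0 /\ r * Derive (Derive f) z0 <= Derive (Derive g) z0.
Proof.
  intros Hle Heq Hf Hg Hf2 Hg2.
  set (h := fun z => g z - r * f z).
  assert (Hex : forall z, ex_derive h z) by (intros z; unfold h; auto_derive; auto).
  assert (Hdh : forall z, Derive h z = Derive g z - r * Derive f z).
  { intros z. unfold h. rewrite Derive_minus, Derive_scal; auto. apply ex_derive_scal, Hf. }
  assert (Hex2 : ex_derive (Derive h) z0).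
  { apply (ex_derive_ext (fun z => Derive g z - r * Derive f z)); [intros; symmetry; apply Hdh|].
    auto_derive; auto. }
  assert (Hdh2 : Derive (Derive h) z0 = Derive (Derive g) z0 - r * Derive (Derive f) z0).
  { rewrite (Derive_ext _ _ _ Hdh), Derive_minus, Derive_scal; auto. apply ex_derive_scal, Hf2. }
  destruct (global_min_derive h z0) as [H1 H2]; auto.
  { intros z. unfold h. specialize (Hle z). lra. }
  rewrite Hdh in H1. rewrite Hdh2 in H2. split; lra.
Qed.

Definition joint_continuous_at (f : R -> R -> R) (z t : R) : Prop :=
  continuous (fun p : R * R => f (fst p) (snd p)) (z, t).

Lemma joint_continuous_at_ball f z t : joint_continuous_at f z t ->
  forall eps, 0 < eps -> exists d, 0 < d /\
    forall z' t', Rabs (z' - z) < d -> Rabs (t' - t) < d -> Rabs (f z' t' - f z t) < eps.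
Proof.
  intros Hf eps Heps.
  destruct (proj1 (@filterlim_locally (R * R) R_UniformSpace _ _ _ _) Hf (mkposreal eps Heps))
    as [[d Hd] Hball].
  exists d. split; [exact Hd|]. intros z' t' Hz Ht. apply (Hball (z', t')). split; assumption.
Qed.

Lemma joint_continuous_at_z f z t : joint_continuous_at f z t ->
  continuity_pt (fun z' => f z' t) z.
Proof.
  intros Hf eps Heps. destruct (joint_continuous_at_ball f z t Hf eps Heps) as [d [Hd Hball]].
  exists d. split; [lra|]. intros x [_ Hx]. apply Hball; [exact Hx|].
  rewrite Rminus_eq_0, Rabs_R0. lra.
Qed.

Lemma periodic_z_shift f : periodic_z f -> forall k z t, f (z + 2 * PI * IZR k) t = f z t.
Proof.
  intros Hf.
  assert (Hnat : forall n z t, f (z + 2 * PI * INR n) t = f z t).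
  { induction n as [|n IH]; intros z t.
    - simpl. f_equal. ring.
    - rewrite S_INR, <- (IH z t), <- (Hf (z + 2 * PI * INR n)). f_equal. ring. }
  intros k z t. destruct (Z.le_gt_cases 0 k) as [Hk|Hk].
  - destruct (Z_of_nat_complete k Hk) as [n ->]. rewrite <- INR_IZR_INZ. apply Hnat.
  - destruct (Z_of_nat_complete (- k) ltac:(lia)) as [n Hn].
    replace k with (- Z.of_nat n)%Z by lia. rewrite opp_IZR, <- INR_IZR_INZ.
    rewrite <- (Hnat n (z + 2 * PI * - INR n) t). f_equal. ring.
Qed.

Lemma periodic_z_reduce f : periodic_z f -> forall z, exists z', 0 <= z' <= 2 * PI /\
  forall t, f z' t = f z t.
Proof.
  intros Hf z. pose proof PI_RGT_0.
  set (r := z / (2 * PI)). destruct (archimed r) as [H1 H2].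
  exists (z + 2 * PI * IZR (- (up r - 1))). split.
  - rewrite opp_IZR, minus_IZR.
    assert (E : z = 2 * PI * r) by (unfold r; field; lra).
    split; rewrite E; nra.
  - intros t. apply periodic_z_shift, Hf.
Qed.

Lemma amin_of_minimizer f t z0 : (forall z, f z0 t <= f z t) -> amin f t = f z0 t.
Proof.
  intros Hmin. unfold amin. rewrite (is_glb_Rbar_unique _ (Finite (f z0 t))); [reflexivity|].
  split.
  - intros y [z ->]. apply Hmin.
  - intros m Hm. apply Hm. exists z0. reflexivity.
Qed.

Lemma amin_attained f t : periodic_z f -> (forall z, joint_continuous_at f z t) ->
  exists z0, 0 <= z0 <= 2 * PI /\ amin f t = f z0 t /\ forall z, f z0 t <= f z t.
Proof.
  intros Hf Hc. pose proof PI_RGT_0.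
  destruct (continuity_ab_min (fun z => f z t) 0 (2 * PI)) as [z0 [Hmin Hz0]];
    [lra | intros; apply joint_continuous_at_z, Hc|].
  assert (Hall : forall z, f z0 t <= f z t).
  { intros z. destruct (periodic_z_reduce f Hf z) as [z' [Hz' <-]]. apply Hmin, Hz'. }
  exists z0. repeat split; try apply Hz0; auto using amin_of_minimizer.
Qed.

Lemma amin_le f t z : periodic_z f -> (forall z, joint_continuous_at f z t) ->
  amin f t <= f z t.
Proof.
  intros Hf Hc. destruct (amin_attained f t Hf Hc) as [z0 [_ [-> Hmin]]]. apply Hmin.
Qed.

(* A Lebesgue number of the cover of [[0, 2 PI]] by continuity balls does the job. *)
Lemma joint_continuous_uniform_z f t : (forall z, 0 <= z <= 2 * PI -> joint_continuous_at f z t) ->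
  forall eps, 0 < eps -> exists d, 0 < d /\ forall z t', 0 <= z <= 2 * PI ->
    Rabs (t' - t) < d -> Rabs (f z t' - f z t) < eps.
Proof.
  intros Hc eps He.
  assert (Hball : forall z, exists del : posreal, 0 <= z <= 2 * PI ->
     forall z' t', Rabs (z' - z) < del -> Rabs (t' - t) < del ->
       Rabs (f z' t' - f z t) < eps / 2).
  { intros z. destruct (classic (0 <= z <= 2 * PI)) as [Hz|Hz].
    - destruct (joint_continuous_at_ball f z t (Hc z Hz) (eps / 2)) as [d [Hd Hd']]; [lra|].
      exists (mkposreal d Hd). intros _. exact Hd'.
    - exists (mkposreal 1 Rlt_0_1). intros; contradiction. }
  destruct (choice _ Hball) as [delta Hdelta].
  destruct (compactness_value_1d 0 (2 * PI) delta) as [[d Hd] Hleb].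
  exists d. split; [exact Hd|].
  intros z t' Hz Ht. apply NNPP. intros Hn. apply (Hleb z Hz). intros [u [Hu [Hzu Hdu]]].
  apply Hn. simpl in *.
  assert (A1 : Rabs (f z t' - f u t) < eps / 2) by (apply Hdelta; auto; lra).
  assert (A2 : Rabs (f z t - f u t) < eps / 2).
  { apply Hdelta; auto. rewrite Rminus_eq_0, Rabs_R0. apply cond_pos. }
  apply Rabs_def2 in A1. apply Rabs_def2 in A2. apply Rabs_def1; lra.
Qed.

Lemma amin_continuous_on_ab f p q : periodic_z f ->
  (forall t, p <= t <= q -> forall z, joint_continuous_at f z t) ->
  continuous_on_ab (amin f) p q.
Proof.
  intros Hf Hc t Ht eps He.
  destruct (joint_continuous_uniform_z f t (fun z _ => Hc t Ht z) eps He) as [d [Hd Hunif]].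
  exists d. split; [exact Hd|]. intros t' Ht' Htt.
  destruct (amin_attained f t Hf (Hc t Ht)) as [z0 [Hz0 [-> Hm0]]].
  destruct (amin_attained f t' Hf (Hc t' Ht')) as [z1 [Hz1 [-> Hm1]]].
  pose proof (Hunif z0 t' Hz0 Htt) as H0. pose proof (Hunif z1 t' Hz1 Htt) as H1.
  specialize (Hm0 z1). specialize (Hm1 z0).
  apply Rabs_def2 in H0. apply Rabs_def2 in H1. apply Rabs_def1; lra.
Qed.

Lemma periodic_pos_lower_bound f p q : p <= q -> periodic_z f ->
  (forall t, p <= t <= q -> forall z, joint_continuous_at f z t) ->
  (forall z t, p <= t <= q -> 0 < f z t) ->
  exists mu, 0 < mu /\ forall z t, p <= t <= q -> mu <= f z t.
Proof.
  intros Hpq Hf Hc Hpos.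
  destruct (continuous_on_ab_min (amin f) p q Hpq (amin_continuous_on_ab f p q Hf Hc))
    as [s [Hs Hmin]].
  exists (amin f s). split.
  - destruct (amin_attained f s Hf (Hc s Hs)) as [z0 [_ [-> _]]]. apply Hpos, Hs.
  - intros z t Ht. eapply Rle_trans; [apply Hmin, Ht | apply amin_le; auto].
Qed.

Lemma amin_ge_of_derivative_at_minimizers W p q m : p <= q -> periodic_z W ->
  (forall t, p <= t <= q -> forall z, joint_continuous_at W z t) ->
  m <= amin W p ->
  (forall s z0, p < s <= q -> W z0 s < m -> (forall z, W z0 s <= W z s) ->
     exists d, derivable_pt_lim (fun t => W z0 t) s d /\ 0 <= d) ->
  m <= amin W q.
Proof.
  intros Hpq Hf Hc Hp Hder.
  cut (0 <= amin W q - m); [lra|].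
  apply (nonneg_of_barriers (fun t => amin W t - m) p q Hpq); [|lra|].
  - intros t Ht eps Heps.
    destruct (amin_continuous_on_ab W p q Hf Hc t Ht eps Heps) as [d [Hd Hclose]].
    exists d. split; [exact Hd|]. intros t' Ht' Htt.
    replace (amin W t' - m - (amin W t - m)) with (amin W t' - amin W t) by ring.
    apply Hclose; assumption.
  - intros s Hs Hneg.
    destruct (amin_attained W s Hf (Hc s ltac:(lra))) as [z0 [_ [Hz0 Hmin]]].
    destruct (Hder s z0 Hs ltac:(lra) Hmin) as [d [Hd Hd0]].
    exists (fun t => W z0 t - m), d. repeat split.
    + intros u Hu. pose proof (amin_le W u z0 Hf (Hc u ltac:(lra))). lra.
    + rewrite Hz0. reflexivity.
    + replace d with (d - 0) by ring.
      apply derivable_pt_lim_minus; [exact Hd | apply derivable_pt_lim_const].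
    + exact Hd0.
Qed.

Lemma amin_sq_add_linear f k t : periodic_z f -> (forall z, joint_continuous_at f z t) ->
  (forall z, 0 < f z t) ->
  amin (fun z t => f z t * f z t + k * t) t = amin f t ^ 2 + k * t.
Proof.
  intros Hf Hc Hpos. destruct (amin_attained f t Hf Hc) as [z0 [_ [-> Hmin]]].
  rewrite (amin_of_minimizer _ t z0); [simpl; ring|].
  intros z. specialize (Hmin z). specialize (Hpos z0). nra.
Qed.

Definition ratio_weight (a b : R -> R -> R) (K z t : R) : R := (b z t / a z t - 1) * exp (- K * t).

Lemma joint_continuous_ratio_weight a b K z t :
  joint_continuous_at a z t -> joint_continuous_at b z t -> a z t <> 0 ->
  joint_continuous_at (ratio_weight a b K) z t.
Proof.
  intros Ha Hb Ha0.
  apply (continuous_mult (K := R_AbsRing)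
           (fun p : R * R => b (fst p) (snd p) / a (fst p) (snd p) - 1)
           (fun p : R * R => exp (- K * snd p))).
  - apply (continuous_minus (K := R_AbsRing) (V := R_NormedModule)
             (fun p : R * R => b (fst p) (snd p) / a (fst p) (snd p)) (fun _ => 1));
      [|apply continuous_const].
    apply (continuous_mult (K := R_AbsRing)); [exact Hb|].
    apply (continuous_comp (fun p : R * R => a (fst p) (snd p)) Rinv); [exact Ha|].
    apply continuous_Rinv, Ha0.
  - apply (continuous_comp (fun p : R * R => - K * snd p) exp); [|apply continuous_exp].
    apply (continuous_mult (K := R_AbsRing) (fun _ => - K) (fun p : R * R => snd p));
      [apply continuous_const | apply continuous_snd].
Qed.

Lemma joint_continuous_sq_add_4t a z t : joint_continuous_at a z t ->
  joint_continuous_at (fun z t => a z t * a z t + 4 * t) z t.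
Proof.
  intros Ha.
  apply (continuous_plus (K := R_AbsRing) (V := R_NormedModule)
           (fun p : R * R => a (fst p) (snd p) * a (fst p) (snd p)) (fun p : R * R => 4 * snd p)).
  - apply (continuous_mult (K := R_AbsRing)); exact Ha.
  - apply (continuous_mult (K := R_AbsRing) (fun _ => 4) (fun p : R * R => snd p));
      [apply continuous_const | apply continuous_snd].
Qed.

Lemma div_sub_one_nonneg x y : 0 < x -> (0 <= y / x - 1 <-> x <= y).
Proof.
  intros Hx. replace (y / x - 1) with ((y - x) / x) by (field; lra). split; intros H.
  - apply (Rmult_le_compat_r x) in H; [|lra].
    replace ((y - x) / x * x) with (y - x) in H by (field; lra). lra.
  - apply Rdiv_le_0_compat; lra.
Qed.

Lemma ds_ds_eq (phi f : R -> R -> R) z t :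
  ex_derive (fun z' => dz f z' t) z -> ex_derive (fun z' => phi z' t) z -> phi z t <> 0 ->
  ds phi (ds phi f) z t =
  (Derive (fun z' => dz f z' t) z * phi z t - dz f z t * dz phi z t) / phi z t ^ 2 / phi z t.
Proof.
  intros Hf Hphi Hphi0.
  change (ds phi (ds phi f) z t) with (Derive (fun z' => dz f z' t / phi z' t) z / phi z t).
  rewrite Derive_div; auto.
Qed.

Lemma reaction_a_le A B C : 0 < A <= B -> A <= C ->
  2 * (A ^ 4 - (B ^ 2 - C ^ 2) ^ 2) / (A * B ^ 2 * C ^ 2) <= 2 / A.
Proof.
  intros HAB HAC.
  assert (HA4 : A ^ 4 <= B ^ 2 * C ^ 2).
  { replace (A ^ 4) with (A ^ 2 * A ^ 2) by ring.
    apply Rmult_le_compat; try apply pow_incr; nra. }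
  cut (0 <= 2 / A - 2 * (A ^ 4 - (B ^ 2 - C ^ 2) ^ 2) / (A * B ^ 2 * C ^ 2)); [lra|].
  replace (2 / A - 2 * (A ^ 4 - (B ^ 2 - C ^ 2) ^ 2) / (A * B ^ 2 * C ^ 2))
    with (2 * (B ^ 2 * C ^ 2 - A ^ 4 + (B ^ 2 - C ^ 2) ^ 2) / (A * B ^ 2 * C ^ 2))
    by (field; repeat split; lra).
  apply Rle_mult_inv_pos.
  - pose proof (pow2_ge_0 (B ^ 2 - C ^ 2)). lra.
  - repeat apply Rmult_lt_0_compat; try apply pow_lt; lra.
Qed.

Lemma reaction_ratio_ge A B C mu : 0 < mu <= A -> mu <= B -> 0 < C ->
  - (8 / mu ^ 2) <= 4 * (A + B) * (A ^ 2 + B ^ 2 - C ^ 2) / (A ^ 2 * B * C ^ 2).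
Proof.
  intros HA HB HC.
  assert (Hlow : - (4 / (A * B) + 4 / (A * A))
                 <= 4 * (A + B) * (A ^ 2 + B ^ 2 - C ^ 2) / (A ^ 2 * B * C ^ 2)).
  { replace (- (4 / (A * B) + 4 / (A * A))) with (4 * (A + B) * (- C ^ 2) / (A ^ 2 * B * C ^ 2))
      by (field; lra).
    unfold Rdiv. apply Rmult_le_compat_r.
    - left. apply Rinv_0_lt_compat. repeat apply Rmult_lt_0_compat; try apply pow_lt; lra.
    - apply Rmult_le_compat_l; nra. }
  assert (HAB : 4 / (A * B) <= 4 / (mu * mu)).
  { apply Rmult_le_compat_l; [lra|]. apply Rinv_le_contravar; [nra | apply Rmult_le_compat; lra]. }
  assert (HAA : 4 / (A * A) <= 4 / (mu * mu)).
  { apply Rmult_le_compat_l; [lra|]. apply Rinv_le_contravar; [nra | apply Rmult_le_compat; lra]. }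
  replace (8 / mu ^ 2) with (4 / (mu * mu) + 4 / (mu * mu)) by (field; lra).
  lra.
Qed.

Record rf_regular (T : R) (f : R -> R -> R) : Prop := {
  rf_periodic : periodic_z f;
  rf_continuous : forall z t, 0 <= t < T -> joint_continuous_at f z t;
  rf_pos : forall z t, 0 <= t < T -> 0 < f z t;
  rf_ex_dz : forall z t, 0 < t < T -> ex_derive (fun z' => f z' t) z;
  rf_ex_dt : forall z t, 0 < t < T -> ex_derive (fun t' => f z t') t;
  rf_ex_dzz : forall z t, 0 < t < T -> ex_derive (fun z' => dz f z' t) z }.

Lemma RF_solution_regular phi a b c T f : RF_solution phi a b c T ->
  f = phi \/ f = a \/ f = b \/ f = c -> rf_regular T f.
Proof.
  intros [_ [Hf _]] Hmem. destruct (Hf f Hmem) as [Hper [Hsmooth [Hcont Hpos]]].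
  destruct (Hsmooth 2%nat) as [Hd [[Hdz _] _]].
  split; auto; intros z t Ht; apply (Hd z t Ht) || apply (Hdz z t Ht).
Qed.

Lemma RF_dt_a phi a b c T z t : RF_solution phi a b c T -> 0 < t < T ->
  dt a z t = ds phi (ds phi a) z t + ds phi a z t * (ds phi b z t / b z t + ds phi c z t / c z t)
    - 2 * (a z t ^ 4 - (b z t ^ 2 - c z t ^ 2) ^ 2) / (a z t * b z t ^ 2 * c z t ^ 2).
Proof. intros [_ [_ Hpde]] Ht. apply (Hpde z t Ht). Qed.

Lemma RF_dt_b phi a b c T z t : RF_solution phi a b c T -> 0 < t < T ->
  dt b z t = ds phi (ds phi b) z t + ds phi b z t * (ds phi c z t / c z t + ds phi a z t / a z t)
    - 2 * (b z t ^ 4 - (c z t ^ 2 - a z t ^ 2) ^ 2) / (b z t * c z t ^ 2 * a z t ^ 2).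
Proof. intros [_ [_ Hpde]] Ht. apply (Hpde z t Ht). Qed.

Lemma RF_solution_swap_bc phi a b c T :
  RF_solution phi a b c T -> RF_solution phi a c b T.
Proof.
  intros Hsol. pose proof Hsol as [HT [Hf Hpde]].
  split; [exact HT|split].
  - intros f Hmem. apply Hf. tauto.
  - intros z t Ht.
    assert (Hpos : forall f, f = a \/ f = b \/ f = c -> 0 < f z t)
      by (intros f Hmem; apply (rf_pos T f (RF_solution_regular _ _ _ _ _ f Hsol ltac:(tauto)));
          lra).
    assert (Ha := Hpos a ltac:(tauto)). assert (Hb := Hpos b ltac:(tauto)).
    assert (Hc := Hpos c ltac:(tauto)).
    destruct (Hpde z t Ht) as [Ephi [Ea [Eb Ec]]]. cbv zeta in *.
    repeat split; [rewrite Ephi | rewrite Ea | rewrite Ec | rewrite Eb]; field; lra.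
Qed.

Section Solution.

Variables (phi a b c : R -> R -> R) (T : R).
Hypothesis Hsol : RF_solution phi a b c T.

Let Rphi : rf_regular T phi.
Proof. apply (RF_solution_regular phi a b c); tauto. Qed.
Let Ra : rf_regular T a.
Proof. apply (RF_solution_regular phi a b c); tauto. Qed.
Let Rb : rf_regular T b.
Proof. apply (RF_solution_regular phi a b c); tauto. Qed.
Let Rc : rf_regular T c.
Proof. apply (RF_solution_regular phi a b c); tauto. Qed.

Lemma RF_ds_ds f z t : rf_regular T f -> 0 < t < T ->
  ds phi (ds phi f) z t =
  (Derive (fun z' => dz f z' t) z * phi z t - dz f z t * dz phi z t) / phi z t ^ 2 / phi z t.
Proof.
  intros Hf Ht. apply ds_ds_eq; [apply (rf_ex_dzz T f Hf) | apply (rf_ex_dz T phi Rphi) |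
                                  apply Rgt_not_eq, (rf_pos T phi Rphi)]; lra.
Qed.

Lemma dt_ratio_ge_at_minimizer s z0 mu : 0 < s < T -> 0 < mu ->
  mu <= a z0 s -> mu <= b z0 s -> b z0 s < a z0 s ->
  (forall z, b z0 s / a z0 s * a z s <= b z s) ->
  0 <= (dt b z0 s * a z0 s - b z0 s * dt a z0 s) / a z0 s ^ 2
       - 8 / mu ^ 2 * (b z0 s / a z0 s - 1).
Proof.
  intros Hs Hmu HmuA HmuB HBA Hratio.
  assert (Hs' : 0 <= s < T) by lra.
  assert (HA := rf_pos T a Ra z0 s Hs'). assert (HB := rf_pos T b Rb z0 s Hs').
  assert (HC := rf_pos T c Rc z0 s Hs'). assert (Hph := rf_pos T phi Rphi z0 s Hs').
  set (r := b z0 s / a z0 s).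
  destruct (touching_derivatives (fun z => a z s) (fun z => b z s) r z0) as [Hdz Hdzz];
    [exact Hratio | unfold r; field; lra | intros z; apply (rf_ex_dz T a Ra); lra
    | intros z; apply (rf_ex_dz T b Rb); lra | apply (rf_ex_dzz T a Ra); lra
    | apply (rf_ex_dzz T b Rb); lra |].
  change (dz b z0 s = r * dz a z0 s) in Hdz.
  change (r * Derive (fun z => dz a z s) z0 <= Derive (fun z => dz b z s) z0) in Hdzz.
  rewrite (RF_dt_a phi a b c T z0 s Hsol Hs), (RF_dt_b phi a b c T z0 s Hsol Hs).
  rewrite (RF_ds_ds b z0 s Rb Hs), (RF_ds_ds a z0 s Ra Hs). unfold ds. rewrite Hdz.
  set (D2a := Derive (fun z => dz a z s) z0) in *.
  set (D2b := Derive (fun z => dz b z s) z0) in *.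
  set (A := a z0 s) in *. set (B := b z0 s) in *. set (C := c z0 s) in *.
  match goal with |- 0 <= ?E =>
    replace E with ((D2b - r * D2a) / (phi z0 s ^ 2 * A)
      + (A - B) / A * (4 * (A + B) * (A ^ 2 + B ^ 2 - C ^ 2) / (A ^ 2 * B * C ^ 2) + 8 / mu ^ 2))
      by (unfold r; field; repeat split; lra)
  end.
  pose proof (reaction_ratio_ge A B C mu ltac:(lra) HmuB HC).
  apply Rplus_le_le_0_compat; apply Rmult_le_pos; try lra.
  - left. apply Rinv_0_lt_compat, Rmult_lt_0_compat; [apply pow_lt|]; lra.
  - apply Rdiv_le_0_compat; lra.
Qed.

Lemma ratio_weight_derivative_at_minimizer s z0 mu : 0 < s < T -> 0 < mu ->
  mu <= a z0 s -> mu <= b z0 s -> ratio_weight a b (8 / mu ^ 2) z0 s < 0 ->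
  (forall z, ratio_weight a b (8 / mu ^ 2) z0 s <= ratio_weight a b (8 / mu ^ 2) z s) ->
  exists d, derivable_pt_lim (fun t => ratio_weight a b (8 / mu ^ 2) z0 t) s d /\ 0 <= d.
Proof.
  intros Hs Hmu HmuA HmuB Hneg Hmin.
  set (K := 8 / mu ^ 2) in *. unfold ratio_weight in *.
  assert (HA := rf_pos T a Ra z0 s ltac:(lra)).
  assert (Hexp : 0 < exp (- K * s)) by apply exp_pos.
  exists (((dt b z0 s * a z0 s - b z0 s * dt a z0 s) / a z0 s ^ 2 - K * (b z0 s / a z0 s - 1))
          * exp (- K * s)).
  split.
  - apply is_derive_Reals. auto_derive.
    + repeat split; [apply (rf_ex_dt T b Rb) | apply (rf_ex_dt T a Ra) | ]; auto; lra.
    + unfold dt. field. lra.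
  - apply Rmult_le_pos; [|lra].
    apply dt_ratio_ge_at_minimizer; auto.
    + assert (Hlt : ~ 0 <= b z0 s / a z0 s - 1) by nra.
      rewrite div_sub_one_nonneg in Hlt by lra. lra.
    + intros z. assert (HAz := rf_pos T a Ra z s ltac:(lra)).
      assert (Hq : b z0 s / a z0 s <= b z s / a z s) by (specialize (Hmin z); nra).
      apply (Rmult_le_compat_r (a z s)) in Hq; [|lra].
      replace (b z s / a z s * a z s) with (b z s) in Hq by (field; lra). exact Hq.
Qed.

Lemma RF_lower_bound_ab t : 0 <= t < T ->
  exists mu, 0 < mu /\ forall z x, 0 <= x <= t -> mu <= a z x /\ mu <= b z x.
Proof.
  intros Ht.
  assert (Hbound : forall f, rf_regular T f ->
            exists mu, 0 < mu /\ forall z x, 0 <= x <= t -> mu <= f z x).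
  { intros f Hf. apply periodic_pos_lower_bound; [lra | apply (rf_periodic T f Hf) | |];
      intros; [apply (rf_continuous T f Hf) | apply (rf_pos T f Hf)]; lra. }
  destruct (Hbound a Ra) as [mua [Hmua Hlowa]]. destruct (Hbound b Rb) as [mub [Hmub Hlowb]].
  exists (Rmin mua mub). split; [apply Rmin_pos; assumption|].
  intros z x Hx. split; eapply Rle_trans;
    [apply Rmin_l | apply Hlowa, Hx | apply Rmin_r | apply Hlowb, Hx].
Qed.

(* With [mu] a lower bound for [a] and [b] on [[0, t]], the weight [exp (- 8 x / mu ^ 2)]
   absorbs the reaction terms: a negative spatial minimum of the weighted ratio cannot
   decrease. *)
Lemma RF_preserves_le_ab : (forall z, a z 0 <= b z 0) ->
  forall t z, 0 <= t < T -> a z t <= b z t.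
Proof.
  intros Hinit t z Ht.
  assert (Hpos : forall z x, 0 <= x <= t -> 0 < a z x) by (intros; apply (rf_pos T a Ra); lra).
  destruct (RF_lower_bound_ab t Ht) as [mu [Hmu Hlow]].
  set (W := ratio_weight a b (8 / mu ^ 2)).
  assert (HWper : periodic_z W).
  { intros z' x. unfold W, ratio_weight.
    rewrite (rf_periodic T a Ra), (rf_periodic T b Rb). reflexivity. }
  assert (HWcont : forall x, 0 <= x <= t -> forall z, joint_continuous_at W z x).
  { intros x Hx z'. apply joint_continuous_ratio_weight;
      [apply (rf_continuous T a Ra) | apply (rf_continuous T b Rb) | apply Rgt_not_eq, Hpos];
      lra. }
  assert (HW : 0 <= amin W t).
  { apply (amin_ge_of_derivative_at_minimizers W 0 t 0); try lra; auto.
    - destruct (amin_attained W 0 HWper (HWcont 0 ltac:(lra))) as [z0 [_ [-> _]]].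
      unfold W, ratio_weight. rewrite Rmult_0_r, exp_0, Rmult_1_r.
      apply div_sub_one_nonneg; [apply Hpos; lra | apply Hinit].
    - intros s z0 Hs.
      apply ratio_weight_derivative_at_minimizer; try apply Hlow; lra. }
  assert (HWz : 0 <= W z t) by (pose proof (amin_le W t z HWper (HWcont t ltac:(lra))); lra).
  unfold W, ratio_weight in HWz.
  apply div_sub_one_nonneg; [apply Hpos; lra|].
  pose proof (exp_pos (- (8 / mu ^ 2) * t)). nra.
Qed.

Lemma dt_a_ge_at_minimizer s z0 : 0 < s < T -> (forall z, a z0 s <= a z s) ->
  a z0 s <= b z0 s -> a z0 s <= c z0 s -> 0 <= 2 * a z0 s * dt a z0 s + 4.
Proof.
  intros Hs Hmin Hab Hac.
  assert (HA := rf_pos T a Ra z0 s ltac:(lra)).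
  assert (Hph := rf_pos T phi Rphi z0 s ltac:(lra)).
  destruct (global_min_derive (fun z => a z s) z0 Hmin (fun z => rf_ex_dz T a Ra z s Hs)
              (rf_ex_dzz T a Ra z0 s Hs)) as [Hdz Hdzz].
  change (dz a z0 s = 0) in Hdz.
  rewrite (RF_dt_a phi a b c T z0 s Hsol Hs), (RF_ds_ds a z0 s Ra Hs). unfold ds. rewrite Hdz.
  change (0 <= Derive (fun z => dz a z s) z0) in Hdzz.
  set (D2a := Derive (fun z => dz a z s) z0) in *.
  pose proof (reaction_a_le (a z0 s) (b z0 s) (c z0 s) ltac:(lra) Hac) as Hreact.
  set (react := 2 * (a z0 s ^ 4 - (b z0 s ^ 2 - c z0 s ^ 2) ^ 2)
                 / (a z0 s * b z0 s ^ 2 * c z0 s ^ 2)) in *.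
  match goal with |- context [?X - react] =>
    replace X with (D2a / phi z0 s ^ 2) by (field; lra) end.
  assert (Hsecond : 0 <= a z0 s * (D2a / phi z0 s ^ 2))
    by (apply Rmult_le_pos; [lra | apply Rdiv_le_0_compat; [lra | apply pow_lt; lra]]).
  assert (Hreact' : a z0 s * react <= 2).
  { replace 2 with (a z0 s * (2 / a z0 s)) by (field; lra).
    apply Rmult_le_compat_l; lra. }
  lra.
Qed.

Lemma amin_sq_add_4t_nondecreasing :
  (forall z t, 0 <= t < T -> a z t <= b z t /\ a z t <= c z t) ->
  forall t t', 0 <= t <= t' -> t' < T -> amin a t ^ 2 + 4 * t <= amin a t' ^ 2 + 4 * t'.
Proof.
  intros Hord t t' Htt' Ht'.
  set (V := fun z x => a z x * a z x + 4 * x).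
  assert (HVper : periodic_z V)
    by (intros z x; unfold V; rewrite (rf_periodic T a Ra); reflexivity).
  assert (HVcont : forall x, t <= x <= t' -> forall z, joint_continuous_at V z x)
    by (intros x Hx z; apply joint_continuous_sq_add_4t, (rf_continuous T a Ra); lra).
  assert (HVamin : forall x, t <= x <= t' -> amin V x = amin a x ^ 2 + 4 * x).
  { intros x Hx. apply amin_sq_add_linear; [apply (rf_periodic T a Ra) | |];
      intros z; [apply (rf_continuous T a Ra) | apply (rf_pos T a Ra)]; lra. }
  rewrite <- !HVamin by lra.
  apply (amin_ge_of_derivative_at_minimizers V t t'); auto; [lra | lra |].
  intros s z0 Hs _ Hmin.
  assert (Hs' : 0 < s < T) by lra.
  exists (2 * a z0 s * dt a z0 s + 4). split.
  - apply is_derive_Reals. unfold V. auto_derive.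
    + repeat split; apply (rf_ex_dt T a Ra); lra.
    + unfold dt. ring.
  - apply dt_a_ge_at_minimizer; try apply Hord; try lra.
    intros z. specialize (Hmin z). unfold V in Hmin.
    pose proof (rf_pos T a Ra z0 s ltac:(lra)). pose proof (rf_pos T a Ra z s ltac:(lra)). nra.
Qed.

End Solution.

Theorem lemma4p1 (phi a b c : R -> R -> R) (T : R) :
  RF_maximal phi a b c T ->
  (forall z, a z 0 <= b z 0 /\ b z 0 <= c z 0) ->
  filterlim (amin a) (at_left T) (locally 0) ->
  forall t, 0 <= t < T -> (amin a t) ^ 2 <= 4 * (T - t).
Proof.
  intros [Hsol _] Hinit Hlim t Ht.
  assert (Hord : forall z x, 0 <= x < T -> a z x <= b z x /\ a z x <= c z x).
  { intros z x Hx. split.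
    - apply (RF_preserves_le_ab phi a b c T Hsol); [intros z'; apply Hinit | exact Hx].
    - apply (RF_preserves_le_ab phi a c b T (RF_solution_swap_bc _ _ _ _ _ Hsol)); [|exact Hx].
      intros z'. specialize (Hinit z'). lra. }
  set (C := amin a t ^ 2 - 4 * (T - t)).
  cut (C <= 0 * 0); [unfold C; lra|].
  apply (closed_filterlim_loc (amin a) (fun x => C <= x * x) 0 Hlim).
  - exists (mkposreal (T - t) ltac:(lra)). intros y Hy HyT.
    unfold ball in Hy; simpl in Hy; unfold AbsRing_ball, abs, minus, plus, opp in Hy; simpl in Hy.
    apply Rabs_def2 in Hy.
    pose proof (amin_sq_add_4t_nondecreasing phi a b c T Hsol Hord t y ltac:(lra) HyT).
    unfold C. simpl in *. lra.
  - apply (closed_comp (fun x => x * x) (fun u => C <= u)); [|apply closed_ge].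
    intros x. apply (continuous_mult (K := R_AbsRing)); apply continuous_id.
Qed.
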